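(* Let $G$ be a finite simple undirected graph, $s\neq t$ vertices and $r\ge2$. Then $$NBP_r(s,t)\le NBP_r^{L}(s,t)+NBP_{r-2}(s,t),$$ and consequently $NBP_r(s,t)\le NBP_1(s,t)+\sum_{m=2}^{r}NBP_m^{L}(s,t)$.
   Context: A nonbacktracking walk of length $r$ from $s$ to $t$ is a sequence $(x_1,\dots,x_{r+1})$ with $x_1=s$, $x_{r+1}=t$, each $\{x_i,x_{i+1}\}$ an edge, and $x_i\ne x_{i+2}$ for $1\le i\le r-1$. $NBP_r(s,t)$ is the number of such walks ($NBP_0(s,t)=0$ for $s\neq t$), and $NBP_r^L(s,t)$ is the number of such walks whose last edge $\{x_r,x_{r+1}\}$ is different from the first edge $\{x_1,x_2\}$. *)

From mathcomp Require Import all_boot.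
Set Implicit Arguments. Unset Strict Implicit. Unset Printing Implicit Defensive.

Definition simple_graph (T : finType) (e : rel T) : Prop :=
  symmetric e /\ irreflexive e.

(* A walk (x_1, ..., x_{r+1}) is encoded as the sequence [:: x_1; ...; x_{r+1}]
   (0-indexed: nth i = x_{i+1}). *)
Definition nb_walk (T : finType) (e : rel T) (r : nat) (s t : T) (w : seq T) : bool :=
  [&& size w == r.+1,
      nth s w 0 == s,
      nth s w r == t,
      [forall i : 'I_r, e (nth s w i) (nth s w i.+1)] &
      [forall i : 'I_r.-1, nth s w i != nth s w i.+2]].

Definition same_edge (T : eqType) (a b c d : T) : bool :=
  ((a == c) && (b == d)) || ((a == d) && (b == c)).

Definition NBP (T : finType) (e : rel T) (r : nat) (s t : T) : nat :=
  #|[set w : r.+1.-tuple T | nb_walk e r s t w]|.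

Definition NBPL (T : finType) (e : rel T) (r : nat) (s t : T) : nat :=
  #|[set w : r.+1.-tuple T | nb_walk e r s t w &&
       ~~ same_edge (nth s w r.-1) (nth s w r) (nth s w 0) (nth s w 1)]|.

From mathcomp Require Import all_boot zify.

Set Implicit Arguments.
Unset Strict Implicit.
Unset Printing Implicit Defensive.

(* A walk counted by NBP_r(s,t) but not by NBP^L_r(s,t) has equal first and
   last edges {s, x_2} = {x_r, t}; as s <> t this forces x_r = s and x_2 = t.
   Its interior read backwards, x_r, ..., x_2, is then a nonbacktracking walk
   of length r - 2 from s to t, and it determines the original walk, whence
   NBP_r <= NBP^L_r + NBP_{r-2}.  Unfolding this recursion in steps of two down
   to NBP_1 or to NBP_0(s,t) = 0 gives the summed bound. *)

Section NonbacktrackingWalks.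
Variables (T : finType) (e : rel T).

Lemma nb_walkP r s t (w : seq T) :
  nb_walk e r s t w <->
  [/\ size w = r.+1, nth s w 0 = s, nth s w r = t,
      forall i, i < r -> e (nth s w i) (nth s w i.+1) &
      forall i, i.+1 < r -> nth s w i != nth s w i.+2].
Proof.
split.
- case/and5P => /eqP size_w /eqP w0 /eqP wr /forallP edges /forallP nb.
  split=> // i ltir; first exact: (edges (Ordinal ltir)).
  have ltir' : i < r.-1 by lia.
  exact: (nb (Ordinal ltir')).
- case=> size_w w0 wr edges nb; apply/and5P; split; try exact/eqP.
  + by apply/forallP => i; apply: edges.
  + by apply/forallP => i; apply: nb; have := ltn_ord i; lia.
Qed.

Lemma NBP0 s t : s != t -> NBP e 0 s t = 0.
Proof.
move=> neq_st; apply/eqP; rewrite cards_eq0; apply/eqP/setP => w; rewrite !inE.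
apply/negbTE/negP => /nb_walkP [_ w0 wt _ _].
by move: neq_st; rewrite -wt w0 eqxx.
Qed.

Lemma same_edge_fixed_ends (a b x y : T) :
  a != b -> same_edge x b a y -> x = a /\ y = b.
Proof.
move=> neq_ab /orP [/andP [/eqP -> /eqP ->] // | /andP [_ eq_ba]].
by rewrite eq_sym eq_ba in neq_ab.
Qed.

Section ReversedInterior.
Variables (s t : T) (r : nat).

Definition interior_rev (w : seq T) : r.+1.-tuple T :=
  [tuple of [seq nth s w (r.+1 - i) | i <- iota 0 r.+1]].

Lemma nth_interior_rev w i :
  i <= r -> nth s (interior_rev w) i = nth s w (r.+1 - i).
Proof. by move=> leir; rewrite (nth_map 0) ?size_iota // nth_iota. Qed.

Lemma nb_walk_interior_rev w :
  symmetric e -> nb_walk e r.+2 s t w -> nth s w r.+1 = s -> nth s w 1 = t ->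
  nb_walk e r s t (interior_rev w).
Proof.
move=> e_sym /nb_walkP [_ _ _ edges nb] wr1 w1; apply/nb_walkP; split.
- by rewrite size_tuple.
- by rewrite nth_interior_rev // subn0.
- by rewrite nth_interior_rev // subSnn.
- move=> i ltir; rewrite !nth_interior_rev ?(ltnW ltir) // e_sym.
  have -> : r.+1 - i = (r.+1 - i.+1).+1 by lia.
  by apply: edges; lia.
- move=> i ltir; rewrite !nth_interior_rev 1?eq_sym; try lia.
  have -> : r.+1 - i = (r.+1 - i.+2).+2 by lia.
  by apply: nb; lia.
Qed.

Lemma interior_rev_inj w1 w2 :
  nb_walk e r.+2 s t w1 -> nb_walk e r.+2 s t w2 ->
  interior_rev w1 = interior_rev w2 -> w1 = w2.
Proof.
move=> /nb_walkP [size1 w10 w1r _ _] /nb_walkP [size2 w20 w2r _ _] eq_int.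
apply: (@eq_from_nth _ s); first by rewrite size1 size2.
rewrite size1 => -[|i] ltir; first by rewrite w10 w20.
have [ltir1 | geir1] := ltnP i r.+1; last first.
  have -> : i = r.+1 by lia.
  by rewrite w1r w2r.
have := congr1 (fun u : r.+1.-tuple T => nth s u (r - i)) eq_int.
by rewrite /= !nth_interior_rev ?leq_subr //; have -> : r.+1 - (r - i) = i.+1 by lia.
Qed.

End ReversedInterior.

Lemma NBP_le_NBPL_NBP s t r :
  symmetric e -> s != t -> NBP e r.+2 s t <= NBPL e r.+2 s t + NBP e r s t.
Proof.
move=> e_sym neq_st; rewrite /NBP /NBPL /=.
set W := [set w : r.+3.-tuple T | nb_walk e r.+2 s t w].
set L := [set w : r.+3.-tuple T |
  ~~ same_edge (nth s w r.+1) (nth s w r.+2) (nth s w 0) (nth s w 1)].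
rewrite -(cardsID L W) leq_add ?subset_leq_card //; first by apply/subsetP => w; rewrite !inE.
have returning w : w \in W :\: L ->
    [/\ nb_walk e r.+2 s t w, nth s w r.+1 = s & nth s w 1 = t].
  rewrite !inE negbK => /andP [same walk].
  have /nb_walkP [_ w0 wt _ _] := walk; rewrite w0 wt in same.
  by case: (same_edge_fixed_ends neq_st same).
rewrite -(card_in_imset (f := fun w : r.+3.-tuple T => interior_rev s r w)).
  apply/subset_leq_card/subsetP => _ /imsetP [w /returning [walk wr1 w1] ->].
  by rewrite inE nb_walk_interior_rev.
move=> w1 w2 /returning [walk1 _ _] /returning [walk2 _ _] eq_int.
exact/val_inj/(interior_rev_inj walk1 walk2).
Qed.

Lemma NBP_le_NBP1_sum_NBPL s t r :
  symmetric e -> s != t ->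
  NBP e r s t <= NBP e 1 s t + \sum_(2 <= m < r.+1) NBPL e m s t.
Proof.
move=> e_sym neq_st; elim/ltn_ind: r => -[|[|r]] IH.
- by rewrite NBP0.
- by rewrite big_geq // addn0.
rewrite (leq_trans (NBP_le_NBPL_NBP r e_sym neq_st)) //.
rewrite (big_nat_recr r.+2) //= addnA [X in _ <= X]addnC leq_add2l.
apply: (leq_trans (IH r _)) => //; rewrite leq_add2l.
by apply: (le_big_nat leqnn (fun m n => leq_addr n m)).
Qed.

End NonbacktrackingWalks.

Theorem mainTheorem6 (T : finType) (e : rel T) (s t : T) (r : nat) :
  simple_graph e -> s != t -> 2 <= r ->
  NBP e r s t <= NBPL e r s t + NBP e (r - 2) s t /\
  NBP e r s t <= NBP e 1 s t + \sum_(2 <= m < r.+1) NBPL e m s t.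
Proof.
case=> e_sym _ neq_st; case: r => [|[|r]] // _; split.
- by rewrite subn2; exact: NBP_le_NBPL_NBP.
- exact: NBP_le_NBP1_sum_NBPL.
Qed.
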